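(* In the setting of the context, there exist elements $w_{ki}\in\overline{M'}$ ($1\le k\le r$, $2\le i\le n_k$) such that (1) $\langle w_{ki},\tilde e_{k1}\rangle=-1$ and $\langle w_{ki},\tilde e_{ki}\rangle=1$; (2) $\langle w_{ki},\tilde e_{lj}\rangle=0$ for all $\tilde e_{lj}\ne\tilde e_{k1},\tilde e_{ki}$; (3) $\langle w_{ki},e_{lj}\rangle=0$ for all $e_{lj}$. Moreover, for any elements $w_{ki}$ satisfying (1)–(3), $$\operatorname{Ann}(e)'=\operatorname{Ann}(e,\tilde e)\oplus\bigoplus_{k=1}^r\bigoplus_{i=2}^{n_k}\mathbb{Z}w_{ki}.$$
   Context: $M\cong\mathbb{Z}^d$, $N$ dual. $\{\Delta_1,\dots,\Delta_s\}$ is a nef-partition (lattice polytopes in $M_\mathbb{R}$ containing $0$ with reflexive Minkowski sum) of the $d$-dimensional reflexive polytope $\operatorname{Conv}(\cup\Delta_i)$, with dual nef-partition $\nabla_j=\{y:\langle x,y\rangle\ge-\delta_{ij}\ \forall x\in\Delta_i,\forall i\}$. $\overline M=\mathbb{Z}^s\oplus M$, $\overline N=\mathbb{Z}^s\oplus N$ with natural pairing; $K=\{(a;x):a_i\ge0,x\in\sum a_i\Delta_i\}$, $K^\vee$ its dual cone; $e_i=(\epsilon_i;0)$ ($\epsilon_i$ standard basis vectors of $\mathbb{Z}^s$), $\deg^\vee=\sum e_i$. Let $\tilde e_i=(\epsilon_i;p_i)\in K^\vee\cap\overline N$ with $p_i\in N\cap\nabla_i$ and $\sum_i\tilde e_i=\deg^\vee$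 (so $\sum p_i=0$). Let $r=s-\dim\operatorname{Span}_\mathbb{R}\{p_i\}$ and let $\{1,\dots,s\}=I_1\sqcup\dots\sqcup I_r$ with $I_k$ nonempty, $\sum_{i\in I_k}p_i=0$. Write $n_k=\#I_k$, $I_k=\{k1,\dots,kn_k\}$ and index $e_{ki},\tilde e_{ki},p_{ki}$ accordingly; $\{p_{ki}:2\le i\le n_k,1\le k\le r\}$ is $\mathbb{R}$-linearly independent. Choose $\xi_1,\dots,\xi_{d+r-s}\in N$ whose images form a basis of the free part of $N/\sum_{k,i}\mathbb{Z}p_{ki}$, set $N'=\operatorname{Span}_\mathbb{Z}(\{p_{ki}:i\ge2\}\cup\{\xi_j\})$, $M'=\operatorname{Hom}(N',\mathbb{Z})\supset M$, $\overline{M'}=\mathbb{Z}^s\oplus M'$ (dual to $\mathbb{Z}^s\oplus N'$, which contains all $e_i,\tilde e_i$). $\operatorname{Ann}(e)'=\{m\in\overline{M'}:\langle m,e_i\rangle=0\ \forall i\}$ and $\operatorname{Ann}(e,\tilde e)=\{m\in\overline{M'}:\langle m,e_i\rangle=\langle m,\tilde e_j\rangle=0\ \forall i,j\}$ (which equals the corresponding sublattice of $\overline M$). *)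

From HB Require Import structures.
From mathcomp Require Import all_boot all_order all_algebra reals.
Set Implicit Arguments.
Unset Strict Implicit.
Unset Printing Implicit Defensive.
Import Order.TTheory GRing.Theory Num.Theory.
Local Open Scope ring_scope.

(* M = Z^d, N = Z^d, points of M, N are integer row vectors 'rV[int]_d. *)

Definition ipt (R : realType) (d : nat) (v : 'rV[int]_d) : 'rV[R]_d :=
  map_mx (fun z : int => z%:~R) v.

Definition pairR (R : realType) (d : nat) (x y : 'rV[R]_d) : R :=
  \sum_(j < d) x 0 j * y 0 j.

Definition conv_hull (R : realType) (d : nat) (P : 'rV[R]_d -> Prop)
  (x : 'rV[R]_d) : Prop :=
  exists (n : nat) (y : 'I_n -> 'rV[R]_d) (c : 'I_n -> R),
    [/\ forall j, P (y j), forall j, 0 <= c j, \sum_j c j = 1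
      & x = \sum_j c j *: y j].

Definition lat_poly (R : realType) (d : nat) (S : seq 'rV[int]_d)
  (x : 'rV[R]_d) : Prop :=
  conv_hull (fun z => exists2 v, v \in S & z = ipt R v) x.

Definition Delta (R : realType) (d s : nat) (V : 'I_s -> seq 'rV[int]_d)
  (i : 'I_s) (x : 'rV[R]_d) : Prop := lat_poly (V i) x.

Definition msum (R : realType) (d s : nat) (V : 'I_s -> seq 'rV[int]_d)
  (x : 'rV[R]_d) : Prop :=
  exists y : 'I_s -> 'rV[R]_d, (forall i, Delta V i (y i)) /\ x = \sum_i y i.

Definition conv_union (R : realType) (d s : nat) (V : 'I_s -> seq 'rV[int]_d)
  (x : 'rV[R]_d) : Prop :=
  conv_hull (fun z => exists i, Delta V i z) x.

Definition reflexive (R : realType) (d : nat) (P : 'rV[R]_d -> Prop) : Prop :=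
  [/\ exists S : seq 'rV[int]_d, forall x, P x <-> lat_poly S x,
      exists2 eps : R, 0 < eps &
        forall x : 'rV[R]_d, (forall j, `|x 0 j| < eps) -> P x
    & exists T : seq 'rV[int]_d, forall y : 'rV[R]_d,
        (forall x, P x -> - 1 <= pairR x y) <-> lat_poly T y].

Definition nef_partition (R : realType) (d s : nat)
  (V : 'I_s -> seq 'rV[int]_d) : Prop :=
  [/\ forall i, Delta V i (0 : 'rV[R]_d),
      reflexive (msum (R := R) V)
    & reflexive (conv_union (R := R) V)].

Definition in_nabla (R : realType) (d s : nat) (V : 'I_s -> seq 'rV[int]_d)
  (j : 'I_s) (y : 'rV[R]_d) : Prop :=
  forall (i : 'I_s) (x : 'rV[R]_d), Delta V i x -> - (i == j)%:R <= pairR x y.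

(* the cone K in Mbar_R = R^s (+) M_R *)
Definition inK (R : realType) (d s : nat) (V : 'I_s -> seq 'rV[int]_d)
  (a : 'I_s -> R) (x : 'rV[R]_d) : Prop :=
  (forall i, 0 <= a i) /\
  exists y : 'I_s -> 'rV[R]_d,
    (forall i, exists2 z, Delta V i z & y i = a i *: z) /\ x = \sum_i y i.

Definition inKdual (R : realType) (d s : nat) (V : 'I_s -> seq 'rV[int]_d)
  (b : 'I_s -> R) (y : 'rV[R]_d) : Prop :=
  forall (a : 'I_s -> R) (x : 'rV[R]_d), inK V a x ->
    0 <= \sum_i a i * b i + pairR x y.

Definition pairQ (d : nat) (m : 'rV[rat]_d) (y : 'rV[int]_d) : rat :=
  \sum_(j < d) m 0 j * (y 0 j)%:~R.

(* i is not the distinguished first element k1 of its block I_k *)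
Definition nonrep (s r : nat) (blk : 'I_s -> 'I_r) (rep : 'I_r -> 'I_s)
  (i : 'I_s) : bool := rep (blk i) != i.

Definition sat (d s : nat) (p : 'I_s -> 'rV[int]_d) (n : 'rV[int]_d) : Prop :=
  exists (t : nat) (c : 'I_s -> int), (0 < t)%N /\ n *~ t%:Z = \sum_i p i *~ c i.

(* the images of xi form a basis of the free part (N / sum Z p_i) / torsion *)
Definition free_part_basis (d s t : nat) (p : 'I_s -> 'rV[int]_d)
  (xi : 'I_t -> 'rV[int]_d) : Prop :=
  (forall n : 'rV[int]_d, exists c : 'I_t -> int,
      sat p (n - \sum_j xi j *~ c j)) /\
  (forall c : 'I_t -> int, sat p (\sum_j xi j *~ c j) -> forall j, c j = 0).

Definition inN' (d s r t : nat) (p : 'I_s -> 'rV[int]_d) (blk : 'I_s -> 'I_r)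
  (rep : 'I_r -> 'I_s) (xi : 'I_t -> 'rV[int]_d) (n : 'rV[int]_d) : Prop :=
  exists (c : 'I_s -> int) (c' : 'I_t -> int),
    (forall i, ~~ nonrep blk rep i -> c i = 0) /\
    n = \sum_i p i *~ c i + \sum_j xi j *~ c' j.

(* M' = Hom(N', Z), realised inside M_Q as {m : <m, n> in Z for all n in N'} *)
Definition inM' (d s r t : nat) (p : 'I_s -> 'rV[int]_d) (blk : 'I_s -> 'I_r)
  (rep : 'I_r -> 'I_s) (xi : 'I_t -> 'rV[int]_d) (m : 'rV[rat]_d) : Prop :=
  forall n, inN' p blk rep xi n -> exists z : int, pairQ m n = z%:~R.

(* elements (a ; m) of Mbar'_Q with a in Z^s; they lie in Mbar' iff inM' m *)
Definition mbar (s d : nat) := ('rV[int]_s * 'rV[rat]_d)%type.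

Definition pair_e (s d : nat) (v : mbar s d) (i : 'I_s) : rat := (v.1 0 i)%:~R.

(* <(a;m), e~_i> with e~_i = (eps_i ; p_i) *)
Definition pair_et (s d : nat) (p : 'I_s -> 'rV[int]_d) (v : mbar s d)
  (i : 'I_s) : rat := (v.1 0 i)%:~R + pairQ v.2 (p i).

Definition Ann_e' (d s r t : nat) (p : 'I_s -> 'rV[int]_d) (blk : 'I_s -> 'I_r)
  (rep : 'I_r -> 'I_s) (xi : 'I_t -> 'rV[int]_d) (v : mbar s d) : Prop :=
  inM' p blk rep xi v.2 /\ forall i, pair_e v i = 0.

Definition Ann_eet (d s r t : nat) (p : 'I_s -> 'rV[int]_d) (blk : 'I_s -> 'I_r)
  (rep : 'I_r -> 'I_s) (xi : 'I_t -> 'rV[int]_d) (v : mbar s d) : Prop :=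
  [/\ inM' p blk rep xi v.2, forall i, pair_e v i = 0
    & forall j, pair_et p v j = 0].

(* conditions (1)-(3) on w_ki (i nonrep in block k = blk i, k1 = rep k),
   together with w_ki in Mbar' *)
Definition w_conds (d s r t : nat) (p : 'I_s -> 'rV[int]_d) (blk : 'I_s -> 'I_r)
  (rep : 'I_r -> 'I_s) (xi : 'I_t -> 'rV[int]_d) (w : 'I_s -> mbar s d) : Prop :=
  forall i, nonrep blk rep i ->
    [/\ inM' p blk rep xi (w i).2,
        pair_et p (w i) (rep (blk i)) = -1 /\ pair_et p (w i) i = 1,
        (forall j, j != rep (blk i) -> j != i -> pair_et p (w i) j = 0)
      & forall j, pair_e (w i) j = 0].

Definition direct_decomp (d s r t : nat) (p : 'I_s -> 'rV[int]_d)
  (blk : 'I_s -> 'I_r) (rep : 'I_r -> 'I_s) (xi : 'I_t -> 'rV[int]_d)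
  (w : 'I_s -> mbar s d) : Prop :=
  (forall v : mbar s d, Ann_e' p blk rep xi v <->
     exists u c, Ann_eet p blk rep xi u /\
       v = u + \sum_(i | nonrep blk rep i) w i *~ c i) /\
  (forall (u u' : mbar s d) (c c' : 'I_s -> int),
     Ann_eet p blk rep xi u -> Ann_eet p blk rep xi u' ->
     u + \sum_(i | nonrep blk rep i) w i *~ c i =
     u' + \sum_(i | nonrep blk rep i) w i *~ c' i ->
     u = u' /\ forall i, nonrep blk rep i -> c i = c' i).

From HB Require Import structures.
From mathcomp Require Import all_boot all_order all_algebra reals.
Set Implicit Arguments.
Unset Strict Implicit.
Unset Printing Implicit Defensive.
Import Order.TTheory GRing.Theory Num.Theory.
Local Open Scope ring_scope.

(* The vectors p_ki (i >= 2) and xi_j form a Q-basis of N_Q.  They are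
   independent because the p_ki are and the xi_j form a basis of the free part
   of N / sum Z p_ki.  They span because every lattice vector is an integer
   combination of the xi_j up to an element of the saturation of sum Z p_i,
   which is a rational combination of the p_i, and the block relations
   sum_(i in I_k) p_ki = 0 remove the p_k1 from it.  For the dual basis m_ki,
   w_ki = (0; m_ki) satisfies (1)-(3), the value -1 at e~_k1 again coming from
   the block relation.  Given v in Ann(e)', the c_ki = <v, e~_ki> are integers
   and v - sum c_ki w_ki pairs to zero with all e~_ki, i >= 2, hence by the
   block relations with all e~_k1; pairing with the e~_ki also recovers the
   coefficients of a decomposition, which gives uniqueness. *)

Local Notation qpt := (map_mx (intr : int -> rat)).

Lemma qpt_inj d : injective (qpt : 'rV[int]_d -> 'rV[rat]_d).
Proof. by move=> y z /rowP yz; apply/rowP => j; have := yz j; rewrite !mxE => /intr_inj. Qed.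

Lemma sum_delta_scale (R : pzRingType) (V : lmodType R) (I : finType) (F : I -> V) j :
  \sum_i (i == j)%:R *: F i = F j.
Proof. by rewrite (bigD1 j) //= eqxx scale1r big1 ?addr0 // => i /negbTE ->; rewrite scale0r. Qed.

Lemma sum_delta_cond (R : pzSemiRingType) (I : finType) (P : pred I) i :
  \sum_(j | P j) ((i == j)%:R : R) = (P i)%:R.
Proof.
rewrite big_mkcond (bigD1 i) //= big1 => [|j /negbTE ij]; last by rewrite eq_sym ij if_same.
by rewrite eqxx addr0; case: (P i).
Qed.

Lemma rat_common_denom (I : finType) (q : I -> rat) :
  exists2 D : nat, (0 < D)%N & forall i, exists z : int, q i * D%:R = z%:~R.
Proof.
exists (\prod_i `|denq (q i)|%N); first by apply: prodn_gt0 => i; rewrite absz_gt0 denq_neq0.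
move=> i; rewrite (bigD1 i) //= natrM mulrA natr_absz gtr0_norm ?denq_gt0 // -numqE.
by exists (numq (q i) * (\prod_(j | j != i) `|denq (q j)|%N)%:Z); rewrite intrM.
Qed.

Fact pairQ_is_zmod_morphism d (m : 'rV[rat]_d) : zmod_morphism (pairQ m).
Proof. by move=> y z; rewrite /pairQ -sumrB; apply: eq_bigr => j _; rewrite !mxE intrB mulrBr. Qed.

HB.instance Definition _ d (m : 'rV[rat]_d) :=
  GRing.isZmodMorphism.Build _ _ (pairQ m) (pairQ_is_zmod_morphism m).

Lemma pairQDl d (m1 m2 : 'rV[rat]_d) y : pairQ (m1 + m2) y = pairQ m1 y + pairQ m2 y.
Proof. by rewrite /pairQ -big_split; apply: eq_bigr => j _; rewrite mxE mulrDl. Qed.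

Lemma pairQ0l d (y : 'rV[int]_d) : pairQ 0 y = 0.
Proof. by rewrite /pairQ big1 // => j _; rewrite mxE mul0r. Qed.

Lemma pairQMzl d (m : 'rV[rat]_d) y c : pairQ (m *~ c) y = pairQ m y *~ c.
Proof.
rewrite /pairQ mulrz_suml; apply: eq_bigr => j _.
by rewrite -scaler_int mxE mulrzl mulrzAl.
Qed.

Lemma pairQ_suml d I (r : seq I) (P : pred I) (F : I -> 'rV[rat]_d) y :
  pairQ (\sum_(i <- r | P i) F i) y = \sum_(i <- r | P i) pairQ (F i) y.
Proof.
by apply: (big_morph (fun m => pairQ m y)) => [m1 m2|]; [exact: pairQDl | exact: pairQ0l].
Qed.

Lemma pair_e_eq0 s d (v : mbar s d) : (forall i, pair_e v i = 0) <-> v.1 = 0.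
Proof.
split=> [v0|v10 i]; last by rewrite /pair_e v10 mxE.
by apply/rowP => i; have /eqP := v0 i; rewrite /pair_e intr_eq0 mxE => /eqP.
Qed.

Lemma pair_etD s d p (v1 v2 : mbar s d) j :
  pair_et p (v1 + v2) j = pair_et p v1 j + pair_et p v2 j.
Proof. by rewrite /pair_et /= pairQDl mxE intrD addrACA. Qed.

Lemma pair_et0 s d p j : pair_et p (0 : mbar s d) j = 0.
Proof. by rewrite /pair_et /= pairQ0l mxE addr0. Qed.

Lemma pair_etMz s d p (v : mbar s d) c j : pair_et p (v *~ c) j = pair_et p v j *~ c.
Proof.
rewrite /pair_et (raddfMz fst) (raddfMz snd) pairQMzl mulrzDl.
by rewrite -[v.1 *~ c]scaler_int mxE intrM intz mulrzl.
Qed.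

Lemma pair_et_sum s d p I (r : seq I) (P : pred I) (F : I -> mbar s d) j :
  pair_et p (\sum_(i <- r | P i) F i) j = \sum_(i <- r | P i) pair_et p (F i) j.
Proof.
by apply: (big_morph (fun v => pair_et p v j)) => [v1 v2|]; [exact: pair_etD | exact: pair_et0].
Qed.

Lemma pair_et_fst0 s d p (v : mbar s d) j : v.1 = 0 -> pair_et p v j = pairQ v.2 (p j).
Proof. by move=> v10; rewrite /pair_et v10 mxE add0r. Qed.

Section Lattice.
Variables (d s r t : nat) (p : 'I_s -> 'rV[int]_d) (blk : 'I_s -> 'I_r)
  (rep : 'I_r -> 'I_s) (xi : 'I_t -> 'rV[int]_d).
Hypothesis blk_rep : forall k, blk (rep k) = k.
Hypothesis sum_block_p : forall k, \sum_(i | blk i == k) p i = 0.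
Local Notation nr := (nonrep blk rep).

Lemma nonrep_neq_rep i k : nr i -> i != rep k.
Proof. by apply: contra => /eqP ->; rewrite /nonrep blk_rep. Qed.

Lemma sum_p_block_shift (g : 'I_s -> int) :
  \sum_i p i *~ g i = \sum_i p i *~ (g i - g (rep (blk i))).
Proof.
under [RHS]eq_bigr do rewrite mulrzBr; rewrite sumrB.
rewrite [X in _ - X](partition_big blk predT) //= [X in _ - X]big1 ?subr0 // => k _.
rewrite (eq_bigr (fun i => p i *~ g (rep k))) => [|i /eqP -> //].
by rewrite -mulrz_suml sum_block_p mul0rz.
Qed.

Lemma sat_span n : sat p n ->
  exists2 a : 'I_s -> rat, (forall i, ~~ nr i -> a i = 0) & qpt n = \sum_i a i *: qpt (p i).
Proof.
case=> T [g [T_gt0 nT]]; have T0 : (T%:R : rat) != 0 by rewrite pnatr_eq0 -lt0n.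
exists (fun i => (g i - g (rep (blk i)))%:~R / T%:R).
  by move=> i; rewrite /nonrep negbK => /eqP ->; rewrite subrr mul0r.
have := congr1 qpt nT; rewrite sum_p_block_shift raddfMz raddf_sum -scaler_int.
move=> /(congr1 ( *:%R T%:R^-1)).
rewrite scalerA mulVf // scale1r => ->; rewrite scaler_sumr; apply: eq_bigr => i _.
by rewrite raddfMz -scaler_int scalerA mulrC.
Qed.

Hypothesis xi_free : free_part_basis p xi.

Lemma span_lattice y : exists a b,
  (forall i, ~~ nr i -> a i = 0) /\
  qpt y = \sum_i a i *: qpt (p i) + \sum_(l < t) b l *: qpt (xi l).
Proof.
have [c /sat_span [a a_rep ya]] := xi_free.1 y.
exists a, (fun l => (c l)%:~R); split => //.
rewrite -ya (eq_bigr (fun l => qpt (xi l *~ c l))) => [|l _]; last by rewrite raddfMz scaler_int.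
by rewrite raddfB raddf_sum subrK.
Qed.

Lemma coord_expansion : exists (a : 'I_s -> 'rV[rat]_d) (b : 'I_t -> 'rV[rat]_d),
  (forall i, ~~ nr i -> a i = 0) /\
  forall y, qpt y = \sum_i pairQ (a i) y *: qpt (p i) + \sum_l pairQ (b l) y *: qpt (xi l).
Proof.
have [A /fin_all_exists [B AB]] := fin_all_exists (fun k => span_lattice (delta_mx 0 k)).
exists (fun i => \row_k A k i), (fun l => \row_k B k l); split.
  by move=> i ni; apply/rowP => k; rewrite !mxE (proj1 (AB k)).
move=> y; rewrite [LHS]row_sum_delta.
under eq_bigr => k _ do rewrite mxE -(map_delta_mx intr) (proj2 (AB k)).
under eq_bigr do rewrite scalerDr !scaler_sumr.
rewrite big_split /=; congr (_ + _); rewrite exchange_big; apply: eq_bigr => i _;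
  by rewrite /pairQ scaler_suml; apply: eq_bigr => k _; rewrite scalerA mxE mulrC.
Qed.

Variable R : realType.
Hypothesis p_indep : forall c : 'I_s -> R, (forall i, ~~ nr i -> c i = 0) ->
  \sum_i c i *: ipt R (p i) = 0 -> forall i, c i = 0.

Lemma lattice_indep (al : 'I_s -> int) (be : 'I_t -> int) :
  (forall i, ~~ nr i -> al i = 0) ->
  \sum_i p i *~ al i + \sum_l xi l *~ be l = 0 ->
  (forall i, al i = 0) /\ (forall l, be l = 0).
Proof.
move=> al_rep rel.
have be0 : forall l, be l = 0.
  apply: xi_free.2; exists 1%N, (fun i => - al i); split => //.
  under [RHS]eq_bigr do rewrite mulrNz.
  by apply/eqP; rewrite mulr1z sumrN -addr_eq0 addrC rel.
have p_rel : \sum_i p i *~ al i = 0.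
  by move: rel; rewrite [X in _ + X]big1 ?addr0 // => l _; rewrite be0 mulr0z.
have al0 : forall i, (al i)%:~R = 0 :> R.
  apply: p_indep => [i /al_rep -> //|].
  transitivity (map_mx (intr : int -> R) (\sum_i p i *~ al i)); last by rewrite p_rel raddf0.
  by rewrite raddf_sum; apply: eq_bigr => i _; rewrite raddfMz scaler_int.
by split=> // i; apply/eqP; rewrite -(intr_eq0 R) al0.
Qed.

Lemma rat_indep (a : 'I_s -> rat) (b : 'I_t -> rat) :
  (forall i, ~~ nr i -> a i = 0) ->
  \sum_i a i *: qpt (p i) + \sum_l b l *: qpt (xi l) = 0 ->
  (forall i, a i = 0) /\ (forall l, b l = 0).
Proof.
move=> a_rep rel.
pose q x := match x with inl i => a i | inr l => b l end.
have [D D_gt0 /fin_all_exists [z Dq]] := rat_common_denom q.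
have D0 : (D%:R : rat) != 0 by rewrite pnatr_eq0 -lt0n.
have qE x : q x = (z x)%:~R / D%:R by rewrite -Dq mulfK.
have [] := lattice_indep (al := fun i => z (inl i)) (be := fun l => z (inr l)).
- by move=> i /a_rep ai0; apply/eqP; rewrite -(intr_eq0 rat) -Dq /= ai0 mul0r.
- have := congr1 ( *:%R (D%:R : rat)) rel; rewrite scaler0 scalerDr !scaler_sumr => relD.
  apply: qpt_inj; rewrite raddf0 raddfD !raddf_sum -[RHS]relD.
  by congr (_ + _); apply: eq_bigr => i _; rewrite raddfMz -scaler_int scalerA -Dq mulrC.
by move=> z0 z0'; split=> [i|l]; [have := qE (inl i) | have := qE (inr l)];
  rewrite /= ?z0 ?z0' mul0r.
Qed.

Lemma dual_basis : exists m : 'I_s -> 'rV[rat]_d,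
  (forall i j, nr j -> pairQ (m i) (p j) = (i == j)%:R) /\
  (forall i l, pairQ (m i) (xi l) = 0).
Proof.
have [a [b [a_rep expand]]] := coord_expansion.
have coordE y (al : 'I_s -> rat) (be : 'I_t -> rat) :
    (forall i, ~~ nr i -> al i = 0) ->
    qpt y = \sum_i al i *: qpt (p i) + \sum_l be l *: qpt (xi l) ->
    forall i, pairQ (a i) y = al i.
  move=> al_rep yE i.
  have [] := rat_indep (a := fun i => pairQ (a i) y - al i)
                       (b := fun l => pairQ (b l) y - be l).
  - by move=> i' ni'; rewrite a_rep // al_rep // pairQ0l subrr.
  - under eq_bigr do rewrite scalerBl; under [X in _ + X]eq_bigr do rewrite scalerBl.
    by rewrite !sumrB addrACA -opprD -expand -yE subrr.
  by move=> /(_ i) /eqP; rewrite subr_eq0 => /eqP.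
exists a; split=> [i j nj | i l].
  apply: (coordE _ (fun i => (i == j)%:R) (fun _ => 0)) => [i' ni'|].
    by case: eqVneq ni' => // ->; rewrite nj.
  by rewrite sum_delta_scale big1 ?addr0 // => l _; rewrite scale0r.
apply: (coordE _ (fun _ => 0) (fun l' => (l' == l)%:R)) => //.
by rewrite sum_delta_scale big1 ?add0r // => i' _; rewrite scale0r.
Qed.

Local Notation inM' := (inM' p blk rep xi).
Local Notation Ann_e' := (Ann_e' p blk rep xi).
Local Notation Ann_eet := (Ann_eet p blk rep xi).

Lemma pairQ_p_rep m k :
  pairQ m (p (rep k)) = - \sum_(i | nr i && (blk i == k)) pairQ m (p i).
Proof.
have := congr1 (pairQ m) (sum_block_p k).
rewrite raddf_sum raddf0 (bigD1 (rep k)) ?blk_rep //= => /eqP; rewrite addr_eq0 => /eqP ->.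
congr (- _); apply: eq_bigl => i; rewrite /nonrep.
by case: eqVneq => [<-|_]; rewrite ?andbT ?andbF // eq_sym.
Qed.

Lemma inN'_p i : nr i -> inN' p blk rep xi (p i).
Proof.
move=> ni; exists (fun j => (j == i)%:R), (fun _ => 0); split.
  by move=> j; case: eqVneq => // ->; rewrite ni.
rewrite [X in _ + X]big1 ?addr0 => [|l _]; last exact: mulr0z.
by rewrite (bigD1 i) //= eqxx mulr1z big1 ?addr0 // => j /negbTE ->; rewrite mulr0z.
Qed.

Lemma inM'P m : inM' m <-> forall n, inN' p blk rep xi n -> pairQ m n \is a Num.int.
Proof. by split=> mM n /mM; [case=> z ->; apply: intr_int | move/intrP]. Qed.

Lemma inM'_gen m :
  (forall i, nr i -> pairQ m (p i) \is a Num.int) ->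
  (forall l, pairQ m (xi l) \is a Num.int) -> inM' m.
Proof.
move=> mp mxi; apply/inM'P => _ [c [c' [c_rep ->]]].
rewrite raddfD !raddf_sum; apply: rpredD; apply: rpred_sum => j _; rewrite raddfMz.
  by have [nj|/c_rep ->] := boolP (nr j); [exact/rpredMz/mp | rewrite mulr0z].
exact/rpredMz/mxi.
Qed.

Lemma Ann_e'_comb (w : 'I_s -> mbar s d) v c :
  (forall i, nr i -> Ann_e' (w i)) -> Ann_e' v ->
  Ann_e' (v + \sum_(i | nr i) w i *~ c i).
Proof.
move=> wA [/inM'P vM /pair_e_eq0 v1]; split; last first.
  apply/pair_e_eq0; rewrite (raddfD fst) (raddf_sum fst) /= v1 add0r big1 // => i ni.
  by case: (wA i ni) => _ /pair_e_eq0 w1; rewrite (raddfMz fst) /= w1 mul0rz.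
apply/inM'P => n nN; rewrite (raddfD snd) (raddf_sum snd) pairQDl pairQ_suml rpredD ?vM //.
apply: rpred_sum => i ni; rewrite (raddfMz snd) pairQMzl rpredMz //.
by case: (wA i ni) => /inM'P ->.
Qed.

Lemma Ann_eetP v : Ann_eet v <-> Ann_e' v /\ forall j, nr j -> pair_et p v j = 0.
Proof.
split=> [[vM ve vet] | [[vM ve] vet]]; first by [].
have v1 := (pair_e_eq0 v).1 ve; split=> // j; have [nj|] := boolP (nr j); first exact: vet.
rewrite /nonrep negbK => /eqP <-; rewrite pair_et_fst0 // pairQ_p_rep big1 ?oppr0 //.
by move=> i /andP [ni _]; rewrite -pair_et_fst0 ?vet.
Qed.

Lemma exists_w_conds : exists w, w_conds p blk rep xi w.
Proof.
have [m [mp mxi]] := dual_basis.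
exists (fun i => (0, m i)) => i ni.
have et_nr j : nr j -> pair_et p (0, m i) j = (i == j)%:R.
  by move=> nj; rewrite pair_et_fst0 ?mp.
have et_rep k : pair_et p (0, m i) (rep k) = - (blk i == k)%:R.
  rewrite pair_et_fst0 // pairQ_p_rep (eq_bigr (fun j => (i == j)%:R)).
    by rewrite sum_delta_cond ni.
  by move=> j /andP [nj _]; apply: mp.
split.
- by apply: inM'_gen => [j nj|l]; rewrite ?mp ?mxi.
- by rewrite et_rep eqxx et_nr ?eqxx.
- move=> j jr ji; have [nj|] := boolP (nr j); first by rewrite et_nr // eq_sym (negbTE ji).
  rewrite /nonrep negbK => /eqP ej; rewrite -ej et_rep.
  by case: eqVneq => // bij; rewrite -ej -bij eqxx in jr.
- by move=> j; rewrite /pair_e mxE.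
Qed.

Section Decomposition.
Variable w : 'I_s -> mbar s d.
Hypothesis w_ok : w_conds p blk rep xi w.

Lemma w_Ann_e' i : nr i -> Ann_e' (w i).
Proof. by move=> ni; case: (w_ok ni). Qed.

Lemma pair_et_w i j : nr i -> pair_et p (w i) j = (j == i)%:R - (j == rep (blk i))%:R.
Proof.
move=> ni; case: (w_ok ni) => _ [et_rep et_i] et_other _.
have [->|ji] := eqVneq j i; first by rewrite et_i (negbTE (nonrep_neq_rep _ ni)) subr0.
have [->|jr] := eqVneq j (rep (blk i)); first by rewrite et_rep sub0r.
by rewrite et_other // subrr.
Qed.

Lemma pair_et_wsum c j : nr j ->
  pair_et p (\sum_(i | nr i) w i *~ c i) j = (c j)%:~R.
Proof.
move=> nj; rewrite pair_et_sum (bigD1 j) //= big1 => [|i /andP [ni ij]].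
  by rewrite pair_etMz pair_et_w // eqxx (negbTE (nonrep_neq_rep _ nj)) subr0 addr0.
by rewrite pair_etMz pair_et_w // eq_sym (negbTE ij) (negbTE (nonrep_neq_rep _ nj)) subrr mul0rz.
Qed.

Lemma Ann_e'_decomp v : Ann_e' v ->
  exists u c, Ann_eet u /\ v = u + \sum_(i | nr i) w i *~ c i.
Proof.
move=> vA; have [/inM'P vM /pair_e_eq0 v1] := vA.
have /fin_all_exists [c vc] : forall i, exists c : int, nr i -> pair_et p v i = c%:~R.
  move=> i; have [ni|] := boolP (nr i); last by exists 0.
  have /intrP [c vc] := vM _ (inN'_p ni).
  by exists c; rewrite pair_et_fst0.
exists (v + \sum_(i | nr i) w i *~ - c i), c; split.
  apply/Ann_eetP; split; first exact: Ann_e'_comb w_Ann_e' vA.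
  by move=> j nj; rewrite pair_etD pair_et_wsum // vc // intrN subrr.
by rewrite -addrA -big_split big1 ?addr0 // => i _ /=; rewrite mulrNz addNr.
Qed.

Lemma decomp_unique u u' c c' : Ann_eet u -> Ann_eet u' ->
  u + \sum_(i | nr i) w i *~ c i = u' + \sum_(i | nr i) w i *~ c' i ->
  u = u' /\ forall i, nr i -> c i = c' i.
Proof.
move=> [_ _ u0] [_ _ u'0] e.
have cc' i : nr i -> c i = c' i.
  move=> ni; have := congr1 (fun v => pair_et p v i) e.
  by rewrite !pair_etD u0 u'0 !add0r !pair_et_wsum //; apply: intr_inj.
split=> //; move: e; rewrite (eq_bigr (fun i => w i *~ c' i)) => [|i ni]; last by rewrite cc'.
exact: addIr.
Qed.

Lemma w_direct_decomp : direct_decomp p blk rep xi w.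
Proof.
split=> [v|]; last exact: decomp_unique.
split; first exact: Ann_e'_decomp.
by case=> u [c [/Ann_eetP [uA _] ->]]; apply: Ann_e'_comb w_Ann_e' uA.
Qed.
End Decomposition.
End Lattice.

Theorem lemma4p3 (R : realType) (d s r : nat)
  (V : 'I_s -> seq 'rV[int]_d) (p : 'I_s -> 'rV[int]_d)
  (blk : 'I_s -> 'I_r) (rep : 'I_r -> 'I_s) (xi : 'I_(d + r - s) -> 'rV[int]_d) :
  nef_partition R V ->
  (forall i, in_nabla V i (ipt R (p i))) ->
  (forall i, inKdual V (fun l => (l == i)%:R) (ipt R (p i))) ->
  \sum_i p i = 0 ->
  r = (s - \rank (\matrix_(i < s, j < d) ((p i 0 j)%:~R : R)))%N ->
  (forall k, blk (rep k) = k) ->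
  (forall k, \sum_(i | blk i == k) p i = 0) ->
  (forall c : 'I_s -> R, (forall i, ~~ nonrep blk rep i -> c i = 0) ->
     \sum_i c i *: ipt R (p i) = 0 -> forall i, c i = 0) ->
  free_part_basis p xi ->
  (exists w : 'I_s -> mbar s d, w_conds p blk rep xi w) /\
  (forall w : 'I_s -> mbar s d, w_conds p blk rep xi w ->
     direct_decomp p blk rep xi w).
Proof.
(* Only the lattice data enter. *)
move=> _ _ _ _ _ blk_rep sum_block_p p_indep xi_free; split.
  exact: (exists_w_conds blk_rep sum_block_p xi_free p_indep).
by move=> w; apply: w_direct_decomp.
Qed.
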